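(* Let $X$ be a Fréchet space and $T$ a continuous linear operator on $X$ whose set of periodic points $\mathrm{Per}(T)=\{x\in X:T^nx=x\text{ for some }n\ge1\}$ is dense in $X$. Then $T$ is hyper-recurrent and $\mathrm{Hr}(T)$ is dense in $X$.
   Context: For a continuous linear operator $T$ on a Fréchet space $X$: $x$ is recurrent if $T^{\omega_n}x\to x$ for some strictly increasing sequence $(\omega_n)$ of positive integers; $\mathrm{Rec}(T)$ is the set of recurrent vectors and $T$ is recurrent if $\mathrm{Rec}(T)$ is dense. $\mathfrak{C}$ is the set of strictly increasing sequences $\omega$ with $T^{\omega_n}x\to x$ for some $x\ne0$; $\mathfrak{L}(\omega)=\{x:T^{\omega_n}x\to x\}$. $\mathrm{Hr}(T)$ is the set of $x\in\mathrm{Rec}(T)$ such that $\mathfrak{L}(\omega)$ is dense for every $\omega\in\mathfrak{C}$ with $x\in\mathfrak{L}(\omega)$; a recurrent $T$ is hyper-recurrent if $\mathrm{Hr}(T)\ne\emptyset$. *)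

From HB Require Import structures.
From mathcomp Require Import all_boot all_order all_algebra.
From mathcomp Require Import all_classical all_reals all_analysis.

Set Implicit Arguments.
Unset Strict Implicit.
Unset Printing Implicit Defensive.

Import Order.TTheory GRing.Theory Num.Theory.
Local Open Scope classical_set_scope.
Local Open Scope ring_scope.

Section Recurrence.
Variables (K : numFieldType) (X : tvsType K).

(** Fréchet space: a locally convex (tvsType) Hausdorff space, metrizable
    (countable neighbourhood base at 0) and complete (every Cauchy sequence,
    in the translation-invariant TVS sense, converges). *)
Definition frechet_space : Prop :=
  [/\ hausdorff_space X,
      (exists B : nat -> set X,
          (forall n, nbhs (0 : X) (B n)) /\
          (forall U, nbhs (0 : X) U -> exists n, B n `<=` U)) &
      (forall u : nat -> X,
          (forall U, nbhs (0 : X) U ->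
             exists N, forall m n, (N <= m)%N -> (N <= n)%N -> U (u m - u n)) ->
          exists l : X, u @ \oo --> l)].

Definition pos_strict_incr (w : nat -> nat) : Prop :=
  (0 < w 0)%N /\ forall n, (w n < w n.+1)%N.

Definition Lset (T : X -> X) (w : nat -> nat) : set X :=
  [set x | (fun n => iter (w n) T x) @ \oo --> x].

Definition Rec (T : X -> X) : set X :=
  [set x | exists w, pos_strict_incr w /\ Lset T w x].

Definition recurrent (T : X -> X) : Prop := dense (Rec T).

Definition frakC (T : X -> X) : set (nat -> nat) :=
  [set w | pos_strict_incr w /\ exists x : X, x <> 0 /\ Lset T w x].

Definition Hr (T : X -> X) : set X :=
  [set x | Rec T x /\ forall w, frakC T w -> Lset T w x -> dense (Lset T w)].

Definition hyper_recurrent (T : X -> X) : Prop :=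
  recurrent T /\ Hr T !=set0.

Definition Per (T : X -> X) : set X :=
  [set x | exists n, (1 <= n)%N /\ iter n T x = x].

End Recurrence.

From HB Require Import structures.
From mathcomp Require Import all_boot all_order all_algebra.
From mathcomp Require Import all_classical all_reals all_analysis.
Import Order.TTheory GRing.Theory Num.Theory.
Local Open Scope classical_set_scope.
Local Open Scope ring_scope.

Set Implicit Arguments.
Unset Strict Implicit.
Unset Printing Implicit Defensive.

(* Start from a periodic point x_0 of a given open set and build periodic points
   x_(k+1) = x_k + c z_k, where z_k has exact period k+1 (if some point does) and
   c is a small generic scalar: genericity makes every period of x_(k+1) a period
   of z_k, smallness makes (x_k) Cauchy with a limit x whose orbit stays
   uniformly close to those of the x_k.  Since x_k is periodic, T^r x_k - x_k is
   either 0 or outside a fixed neighbourhood of 0, so T^(w_n) x -> x forces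
   T^(w_n) x_k = x_k for large n.  Hence w_n is eventually a multiple of every
   exact period and L(w) contains the dense set Per(T).  The periods M_k of the
   x_k increase and T^(M_k) x -> x, so x is recurrent. *)

Section IterLinear.
Variables (R : pzRingType) (V : lmodType R) (f : {linear V -> V}).

Lemma iter_linear0 n : iter n f 0 = 0.
Proof. by elim: n => //= n ->; rewrite linear0. Qed.

Lemma iter_linearD n (a b : V) : iter n f (a + b) = iter n f a + iter n f b.
Proof. by elim: n => //= n ->; rewrite linearD. Qed.

Lemma iter_linearN n (a : V) : iter n f (- a) = - iter n f a.
Proof. by elim: n => //= n ->; rewrite linearN. Qed.

Lemma iter_linearB n (a b : V) : iter n f (a - b) = iter n f a - iter n f b.
Proof. by rewrite iter_linearD iter_linearN. Qed.

Lemma iter_linearZ n (c : R) (a : V) : iter n f (c *: a) = c *: iter n f a.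
Proof. by elim: n => //= n ->; rewrite linearZ. Qed.

End IterLinear.

Lemma continuous_iter (S : topologicalType) (f : S -> S) n :
  continuous f -> continuous (iter n f).
Proof.
move=> fc; elim: n => [|n IH] /= x; first exact: cvg_id.
exact: (continuous_comp (IH x) (fc _)).
Qed.

Lemma denseS (S : topologicalType) (A C : set S) : dense A -> A `<=` C -> dense C.
Proof.
by move=> dA AC O O0 oO; have [x [Ox /AC Cx]] := dA O O0 oO; exists x.
Qed.

Section Periodic.
Variables (S : Type) (f : S -> S).

Lemma iter_period_mul p k x : iter p f x = x -> iter (k * p) f x = x.
Proof. by move=> fx; rewrite iterM; elim: k => //= k ->. Qed.

Lemma iter_period_mod p r x : iter p f x = x -> iter r f x = iter (r %% p) f x.
Proof. by move=> fx; rewrite {1}(divn_eq r p) addnC iterD iter_period_mul. Qed.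

Definition exact_period p x := forall r, iter r f x = x <-> (p %| r)%N.

Lemma exists_exact_period n x : (0 < n)%N -> iter n f x = x ->
  exists k, exact_period k.+1 x.
Proof.
move=> n0 fx.
have ex : exists m, `[< (0 < m)%N /\ iter m f x = x >] by exists n; apply/asboolP.
case: (ex_minnP ex) => p /asboolP [p0 fpx] pmin.
exists p.-1; rewrite prednK // => r; split; last first.
  by move=> /dvdnP [k ->]; exact: iter_period_mul.
rewrite (iter_period_mod r fpx) => frx; apply/eqP; rewrite /dvdn.
case: (posnP (r %% p)) => // rp; exfalso.
have : (p <= r %% p)%N by apply: pmin; apply/asboolP.
by rewrite leqNgt ltn_pmod.
Qed.

End Periodic.

Section TvsNbhs.
Variables (K : numFieldType) (X : tvsType K).

Lemma nbhs0_translate (x : X) (A : set X) : nbhs x A -> nbhs 0 (fun v => A (x + v)).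
Proof.
move=> Ax; have := @nbhsB K X A x (- x) Ax; rewrite addNr.
by apply: filterS => v [a Aa <-]; rewrite addrA subrr add0r.
Qed.

Lemma nbhs_translate0 (x : X) (N : set X) : nbhs 0 N -> nbhs x (fun y => N (y - x)).
Proof.
move=> N0; have := @nbhsT K X N x N0.
by apply: filterS => v [a Na <-]; rewrite (addrC x) addrK.
Qed.

Lemma nbhs0_opp (N : set X) : nbhs 0 N -> nbhs 0 (fun v => N (- v)).
Proof.
move=> N0; have := @nbhs0N K X N N0.
by apply: filterS => v [a Na <-]; rewrite opprK.
Qed.

Lemma nbhs0_half (N : set X) : nbhs 0 N ->
  exists2 V : set X, nbhs 0 V & forall a b, V a -> V b -> N (a + b).
Proof.
move=> N0; have := @add_continuous X (0, 0); rewrite /continuous_at /= addr0.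
move=> /(_ N N0) [/= [W1 W2] [/= W10 W20] W12].
exists (W1 `&` W2); first exact: filterI.
by move=> a b [Wa _] [_ Wb]; apply: (W12 (a, b)).
Qed.

Lemma nbhs0_setC1 (d : X) : hausdorff_space X -> d <> 0 -> nbhs 0 (~` [set d]).
Proof.
move=> hX d0; apply: open_nbhs_nbhs; split; last exact: nesym.
by rewrite openC; apply/accessible_closed_set1/hausdorff_accessible.
Qed.

Lemma cvg_sub0P (u : nat -> X) (x : X) :
  u @ \oo --> x <-> forall N, nbhs 0 N -> \forall n \near \oo, N (u n - x).
Proof.
split => [ux N N0|ux A Ax]; first exact: (ux _ (nbhs_translate0 x N0)).
by apply: filterS (ux _ (nbhs0_translate Ax)) => n /=; rewrite addrC subrK.
Qed.

Lemma near0_scale (v : X) (V : set X) : nbhs 0 V -> \forall c \near (0 : K^o), V (c *: v).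
Proof.
move=> V0; have := @scale_continuous K X (0, v); rewrite /continuous_at /= scale0r.
move=> /(_ V V0) [[A B]] /= [A0 Bv] AB.
by apply: filterS A0 => c Ac; apply: (AB (c, v)); split => //; exact: nbhs_singleton.
Qed.

Definition orbit_gap (f : X -> X) (y : X) : set X :=
  [set v | forall r, v = iter r f y - y -> iter r f y = y].

Lemma nbhs0_orbit_gap (f : X -> X) (y : X) M : hausdorff_space X ->
  (0 < M)%N -> iter M f y = y -> nbhs 0 (orbit_gap f y).
Proof.
move=> hX M0 fy.
have : forall r : 'I_M, \forall v \near (0 : X),
    v = iter r f y - y -> iter r f y = y.
  move=> r; have [fry|nfry] := pselect (iter r f y = y); first exact: filterE.
  apply: filterS (nbhs0_setC1 hX (fun e => nfry (subr0_eq e))) => v nv e.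
  by case: nv; rewrite e.
move=> /filter_forall; apply: filterS => v Wv r.
by rewrite (iter_period_mod r fy); apply: (Wv (Ordinal (ltn_pmod r M0))).
Qed.

End TvsNbhs.

Section SmallSums.
Variable X : zmodType.

(* Eight summands accommodate T^w x_k - x_k = (T^w x - x) - T^w (x - x_k) + (x - x_k),
   where each difference with the limit x is a sum of three small terms. *)
Definition small8 (V N : set X) := forall a b c d e f g h,
  V a -> V b -> V c -> V d -> V e -> V f -> V g -> V h ->
  N ((a + b) + (c + d) + ((e + f) + (g + h))).

Definition sum3 (V : set X) : set X :=
  [set v | exists a b c, [/\ V a, V b, V c & v = a + (b + c)]].

Variables (V N : set X).
Hypotheses (VN : small8 V N) (V0 : V 0) (VNV : forall v, V v -> V (- v)).

Lemma small8_sum3 u : sum3 V u -> N u.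
Proof.
move=> [a [b [c [Va Vb Vc ->]]]].
by have := VN Va Vb Vc V0 V0 V0 V0 V0; rewrite !addr0 addrA.
Qed.

Lemma small8_add a b : V a -> V b -> N (a + b).
Proof. by move=> Va Vb; apply: small8_sum3; exists a, b, 0; rewrite addr0. Qed.

Lemma small8_sub a b : V a -> V b -> N (a - b).
Proof. by move=> Va /VNV; apply: small8_add. Qed.

Lemma small8_sub_sum3 u v : sum3 V u -> sum3 V v -> N (u - v).
Proof.
move=> [a [b [c [Va Vb Vc ->]]]] [a' [b' [c' [Va' Vb' Vc' ->]]]].
have := VN Va Vb Vc (VNV Va') (VNV Vb') (VNV Vc') V0 V0.
by rewrite !addr0 !opprD !addrA.
Qed.

Lemma small8_add_sub_sum3 q u v : V q -> sum3 V u -> sum3 V v -> N (q - u + v).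
Proof.
move=> Vq [a [b [c [Va Vb Vc ->]]]] [a' [b' [c' [Va' Vb' Vc' ->]]]].
have := VN Vq (VNV Va) (VNV Vb) (VNV Vc) Va' Vb' Vc' V0.
by rewrite !addr0 !opprD !addrA.
Qed.

Lemma sum3S (W : set X) : V `<=` W -> sum3 V `<=` sum3 W.
Proof.
by move=> VW v [a [b [c [Va Vb Vc ->]]]]; exists a, b, c; split => //; apply: VW.
Qed.

End SmallSums.

Lemma nbhs0_small8 (K : numFieldType) (X : tvsType K) (N : set X) : nbhs 0 N ->
  exists V, [/\ nbhs 0 V, forall v, V v -> V (- v) & small8 V N].
Proof.
move=> N0; have [V1 V10 V1N] := nbhs0_half N0.
have [V2 V20 V21] := nbhs0_half V10.
have [V3 V30 V32] := nbhs0_half V20.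
exists (V3 `&` (fun v => V3 (- v))); split.
- exact: filterI V30 (nbhs0_opp V30).
- by move=> v [? ?]; split; rewrite ?opprK.
- move=> a b c d e f g h [? _] [? _] [? _] [? _] [? _] [? _] [? _] [? _].
  by apply: V1N; apply: V21; apply: V32.
Qed.

Section Perturbation.
Variables (K : numFieldType) (X : tvsType K) (T : {linear X -> X}).

Definition shrink (e : K) (j : nat) : K := e / j.+2%:R.

Lemma shrink_inj e : e != 0 -> injective (shrink e).
Proof.
move=> e0 j k /(mulfI e0) /invr_inj /eqP.
by rewrite eqr_nat => /eqP [].
Qed.

Lemma norm_shrink_lt e j : 0 < e -> `|shrink e j| < e.
Proof.
move=> e0; rewrite /shrink normrM normfV gtr0_norm // normr_nat.
by rewrite ltr_pdivrMr ?ltr0n // ltr_pMr // ltr1n.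
Qed.

(* Two distinct j give two distinct points on the line through a directed by d,
   so at most one of them is 0. *)
Lemma near_shrink_neq0 e (a d : X) : e != 0 -> d <> 0 ->
  \forall j \near \oo, a + shrink e j *: d <> 0.
Proof.
move=> e0 d0.
have [[j0 aj0]|nz] := pselect (exists j0, a + shrink e j0 *: d = 0); last first.
  by exists 0%N => // j _ aj; apply: nz; exists j.
exists j0.+1 => // j /= j0j aj; move: j0j; apply/negP; rewrite -leqNgt.
have /eqP : (shrink e j - shrink e j0) *: d = 0.
  by rewrite scalerBl -(addrKA a) (addrC _ a) aj aj0 subr0.
rewrite scaler_eq0 subr_eq0 => /orP [/eqP/(shrink_inj e0)->//|/eqP//].
Qed.

Lemma small_scaled_orbit (z : X) p (V : set X) : (0 < p)%N -> iter p T z = z ->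
  nbhs 0 V -> exists2 e : K, 0 < e &
    forall c, `|c| < e -> forall j, V (c *: iter j T z).
Proof.
move=> p0 Tz V0.
have : \forall c \near (0 : K^o), forall r : 'I_p, V (c *: iter r T z).
  by apply: (filter_forall (nbhs_filter (0 : K^o))) => r; exact: near0_scale.
move=> /nbhs_norm0P [e e0 eV]; exists e => // c ce j.
rewrite (iter_period_mod j Tz); exact: (eV c ce (Ordinal (ltn_pmod j p0))).
Qed.

Definition shares_periods (x z : X) := forall r, iter r T x = x -> iter r T z = z.

Lemma generic_perturbation (x z : X) M p (e : K) : (0 < M)%N -> (0 < p)%N ->
  iter M T x = x -> iter p T z = z -> 0 < e ->
  exists2 c : K, `|c| < e & shares_periods (x + c *: z) z.
Proof.
move=> M0 p0 Tx Tz e0.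
have Mp0 : (0 < M * p)%N by rewrite muln_gt0 M0.
have TMpz : iter (M * p) T z = z by exact: iter_period_mul.
have TMpx : iter (M * p) T x = x by rewrite mulnC; exact: iter_period_mul.
have : \forall j \near \oo, forall r : 'I_(M * p), iter r T z <> z ->
    iter r T x - x + shrink e j *: (iter r T z - z) <> 0.
  apply: filter_forall => r.
  have [Tzr|nTz] := pselect (iter r T z = z); first by apply: nearW => j /(_ Tzr).
  have d0 : iter r T z - z <> 0 by move/subr0_eq.
  by apply: filterS (near_shrink_neq0 (iter r T x - x) (lt0r_neq0 e0) d0) => j + _.
move=> [N _ /(_ N (leqnn N)) HN]; exists (shrink e N); first exact: norm_shrink_lt.
move=> r Txz; apply: contrapT => nTz.
have TMpxz : iter (M * p) T (x + shrink e N *: z) = x + shrink e N *: z.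
  by rewrite iter_linearD iter_linearZ TMpz TMpx.
have rM := ltn_pmod r Mp0.
apply: (HN (Ordinal rM)); first by rewrite /= -(iter_period_mod r TMpz).
move: Txz; rewrite (iter_period_mod r TMpxz) iter_linearD iter_linearZ /= => Txz.
by rewrite scalerBr addrACA -opprD Txz subrr.
Qed.

Record stage := Stage { pt : X; per : nat; nb : set X }.

Definition admissible (s : stage) :=
  [/\ (0 < per s)%N, iter (per s) T (pt s) = pt s & nbhs 0 (nb s)].

Definition next_stage (B : set X) k (s s' : stage) :=
  [/\ (per s < per s')%N /\ iter (per s') T (pt s') = pt s',
  nbhs 0 (nb s') /\ (forall v, nb s' v -> nb s' (- v)),
  small8 (nb s') (nb s `&` B `&` orbit_gap T (pt s)),
  (forall j, nb s' (iter j T (pt s' - pt s))) &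
  ((exists y, exact_period T k.+1 y) ->
    exists2 z, exact_period T k.+1 z & shares_periods (pt s') z)].

Lemma next_stage_admissible B k s s' :
  admissible s -> next_stage B k s s' -> admissible s'.
Proof.
by case=> M0 _ _ [[/(leq_ltn_trans _) M'0 ?] [? _] _ _ _]; split=> //; apply: M'0.
Qed.

Lemma exists_next_stage (B : set X) k s : hausdorff_space X -> nbhs 0 B ->
  admissible s -> exists s', next_stage B k s s'.
Proof.
case: s => x M V hX B0 [/= M0 Tx V0].
have [V' [V'0 V'N V'8]] :=
  nbhs0_small8 (filterI (filterI V0 B0) (nbhs0_orbit_gap hX M0 Tx)).
have [z Tz zexact] : exists2 z, iter k.+1 T z = z &
    ((exists y, exact_period T k.+1 y) -> exact_period T k.+1 z).
  have [[y ey]|ny] := pselect (exists y, exact_period T k.+1 y).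
    by exists y => //; apply/(ey k.+1).
  by exists 0 => //; rewrite iter_linear0.
have [e e0 eV'] := small_scaled_orbit (ltn0Sn k) Tz V'0.
have [c ce cz] := generic_perturbation M0 (ltn0Sn k) Tx Tz e0.
(* The factor 2 makes the period grow even when k = 0. *)
exists (Stage (x + c *: z) (M * (k.+1 * 2)) V'); split => //=.
- split; first by rewrite ltn_Pmulr // muln_gt0.
  have Tx' : iter (M * (k.+1 * 2)) T x = x by rewrite mulnC iter_period_mul.
  have Tz' : iter (M * (k.+1 * 2)) T z = z by rewrite mulnCA mulnC iter_period_mul.
  by rewrite iter_linearD iter_linearZ Tx' Tz'.
- by move=> j; rewrite (addrC x) addrK iter_linearZ; exact: eV'.
- by move=> /zexact ez; exists z.
Qed.

End Perturbation.

Section Construction.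
Unset Implicit Arguments.
Context {K : numFieldType} {X : tvsType K} {T : {linear X -> X}}.
Context {B : nat -> set X} {s0 : stage X}.
Hypotheses (hX : hausdorff_space X) (B0 : forall n, nbhs 0 (B n))
  (B_base : forall U, nbhs 0 U -> exists n, B n `<=` U)
  (X_complete : forall u : nat -> X,
     (forall U, nbhs 0 U ->
        exists N, forall m n, (N <= m)%N -> (N <= n)%N -> U (u m - u n)) ->
     exists l : X, u @ \oo --> l)
  (Tc : continuous T) (s0_adm : admissible T s0).

Let adm_stage := {s : stage X | admissible T s}.

Lemma exists_next_adm_stage k (s : adm_stage) :
  exists s' : adm_stage, next_stage T (B k) k (sval s) (sval s').
Proof.
have [s' ss'] := exists_next_stage k hX (B0 k) (svalP s).
by exists (exist _ s' (next_stage_admissible (svalP s) ss')).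
Qed.

Let succ k (s : adm_stage) : adm_stage := sval (cid (exists_next_adm_stage k s)).

Fixpoint stages n : adm_stage :=
  if n is m.+1 then succ m (stages m) else exist _ s0 s0_adm.

Let x_ n := pt (sval (stages n)).
Let M_ n := per (sval (stages n)).
Let V_ n := nb (sval (stages n)).

Lemma stages_next n : next_stage T (B n) n (sval (stages n)) (sval (stages n.+1)).
Proof. exact: svalP (cid (exists_next_adm_stage n (stages n))). Qed.

Lemma V_nbhs n : nbhs 0 (V_ n).
Proof. by case: (svalP (stages n)). Qed.

Lemma V_0 n : V_ n 0.
Proof. exact: nbhs_singleton (V_nbhs n). Qed.

Lemma V_opp n v : V_ n.+1 v -> V_ n.+1 (- v).
Proof. by case: (stages_next n) => _ [_ Vopp] _ _ _; exact: Vopp. Qed.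

Lemma V_small8 n : small8 (V_ n.+1) (V_ n `&` B n `&` orbit_gap T (x_ n)).
Proof. by case: (stages_next n). Qed.

Lemma V_add n a b : V_ n.+1 a -> V_ n.+1 b -> V_ n (a + b).
Proof. by move=> Va Vb; case: (small8_add (V_small8 n) (V_0 _) Va Vb) => -[]. Qed.

Lemma V_decr m n a : (m <= n)%N -> V_ n a -> V_ m a.
Proof.
move=> /subnK <-; elim: (n - m)%N a => // d IH a Va.
by apply: IH; rewrite -[a]addr0; apply: V_add => //; exact: V_0.
Qed.

Lemma M_period n : iter (M_ n) T (x_ n) = x_ n.
Proof. by case: (svalP (stages n)). Qed.

Lemma M_gt0 n : (0 < M_ n)%N.
Proof. by case: (svalP (stages n)). Qed.

Lemma M_incr n : (M_ n < M_ n.+1)%N.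
Proof. by case: (stages_next n) => -[]. Qed.

Lemma x_step n j : V_ n.+1 (iter j T (x_ n.+1 - x_ n)).
Proof. by case: (stages_next n) => _ _ _ + _; apply. Qed.

Lemma x_tail k d j : V_ k (iter j T (x_ (k + d) - x_ k)).
Proof.
elim: d k => [|d IH] k; first by rewrite addn0 subrr iter_linear0; exact: V_0.
rewrite -addSnnS -(subrKA (x_ k.+1)) iter_linearD; apply: V_add; first exact: IH.
exact: x_step.
Qed.

Lemma x_cauchy U : nbhs 0 U ->
  exists N, forall m n, (N <= m)%N -> (N <= n)%N -> U (x_ m - x_ n).
Proof.
move=> U0; have [i BU] := B_base _ U0; exists i.+1 => m n im in_; apply: BU.
have -> : x_ m - x_ n = (x_ m - x_ i.+1) - (x_ n - x_ i.+1) by rewrite opprB subrKA.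
have Vm := x_tail i.+1 (m - i.+1) 0; rewrite subnKC // in Vm.
have Vn := x_tail i.+1 (n - i.+1) 0; rewrite subnKC // in Vn.
by case: (small8_sub (V_small8 i) (V_0 _) (@V_opp i) Vm Vn) => -[].
Qed.

Let x_inf := projT1 (cid (X_complete _ x_cauchy)).

Lemma x_cvg : x_ @ \oo --> x_inf.
Proof. exact: projT2 (cid (X_complete _ x_cauchy)). Qed.

Lemma x_inf_sum3 k j : sum3 (V_ k.+1) (iter j T (x_inf - x_ k)).
Proof.
have Tx : (fun m => iter j T (x_ m)) @ \oo --> iter j T x_inf.
  by apply: continuous_cvg; [exact: continuous_iter | exact: x_cvg].
have [m km Vm] : exists2 m, (k < m)%N & V_ k.+1 (iter j T x_inf - iter j T (x_ m)).
  have [N _ VN] := (cvg_sub0P _ _).1 Tx _ (nbhs0_opp (V_nbhs k.+1)).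
  exists (maxn N k.+1); first by rewrite leq_max leqnn orbT.
  by rewrite -opprB; apply: VN; exact: leq_maxl.
exists (iter j T x_inf - iter j T (x_ m)), (iter j T (x_ m - x_ k.+1)),
  (iter j T (x_ k.+1 - x_ k)); split => //.
- by have := x_tail k.+1 (m - k.+1) j; rewrite subnKC.
- exact: x_step.
- by rewrite -iter_linearD subrKA -iter_linearB -iter_linearD subrKA.
Qed.

Lemma x_inf_fixed_eventually k (w : nat -> nat) :
  (fun n => iter (w n) T x_inf) @ \oo --> x_inf ->
  \forall n \near \oo, iter (w n) T (x_ k) = x_ k.
Proof.
move=> /cvg_sub0P /(_ _ (V_nbhs k.+1)); apply: filterS => n Vn.
have := small8_add_sub_sum3 (V_small8 k) (V_0 _) (V_opp k) Vn
  (x_inf_sum3 k (w n)) (x_inf_sum3 k 0).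
case=> _ /(_ (w n)); apply.
by rewrite /= iter_linearB opprB (addrC (_ - x_inf)) -addrA !subrKA.
Qed.

Lemma x_inf_recurrent : (fun n => iter (M_ n) T x_inf) @ \oo --> x_inf.
Proof.
apply/cvg_sub0P => U U0; have [i BU] := B_base _ U0; exists i.+1 => // k /= ik.
have -> : iter (M_ k) T x_inf - x_inf = iter (M_ k) T (x_inf - x_ k) - (x_inf - x_ k).
  by rewrite iter_linearB M_period opprB subrKA.
have Vik := sum3S (fun a => V_decr i.+1 k.+1 a (ltnW ik)).
by apply: BU; case: (small8_sub_sum3 (V_small8 i) (V_0 _) (V_opp i)
  (Vik _ (x_inf_sum3 k (M_ k))) (Vik _ (x_inf_sum3 k 0))) => -[].
Qed.

Lemma x_inf_near : V_ 0 (x_inf - x_ 0).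
Proof. by case: (small8_sum3 (V_small8 0) (V_0 _) (x_inf_sum3 0 0)) => -[]. Qed.

Lemma Lset_x_inf_Per w : Lset T w x_inf -> Per T `<=` Lset T w.
Proof.
move=> Lw y [n [n1 Tny]]; have [k ek] := exists_exact_period n1 Tny.
have [z ez xz] : exists2 z, exact_period T k.+1 z & shares_periods T (x_ k.+1) z.
  by case: (stages_next k) => _ _ _ _; apply; exists y.
apply: cvg_near_cst; apply: filterS (x_inf_fixed_eventually k.+1 w Lw) => m Tm.
by apply/(ek _)/(ez _); exact: xz.
Qed.

Lemma exists_near_point_forcing_Per : exists x, [/\ nb s0 (x - pt s0), Rec T x &
  forall w, Lset T w x -> Per T `<=` Lset T w].
Proof.
exists x_inf; split; first exact: x_inf_near; last exact: Lset_x_inf_Per.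
by exists M_; split; [split; [exact: M_gt0 | exact: M_incr] | exact: x_inf_recurrent].
Qed.

End Construction.

Theorem theorem5p13 (K : numFieldType) (X : tvsType K) (T : {linear X -> X}) :
  frechet_space X -> continuous T -> dense (Per T) ->
  hyper_recurrent T /\ dense (Hr T).
Proof.
move=> [hX [B [B0 B_base]] X_complete] Tc dPer.
have dHr : dense (Hr T).
  move=> O O0 oO; have [x0 [Ox0 [M [M0 TMx0]]]] := dPer O O0 oO.
  have s0_adm : admissible T (Stage x0 M (fun v => O (x0 + v))).
    by split => //; apply/nbhs0_translate/open_nbhs_nbhs.
  have [x [/= Ox Rx LPer]] :=
    exists_near_point_forcing_Per hX B0 B_base X_complete Tc s0_adm.
  exists x; split; first by rewrite subrKC in Ox.
  by split => // w _ Lw; exact: denseS dPer (LPer w Lw).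
split => //; split; first exact: denseS dHr (fun x Hx => Hx.1).
by have [x [_ Hx]] := dHr setT (ex_intro _ 0 I) openT; exists x.
Qed.
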